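(* Let $\langle A,\to\rangle$ be a conditional algebra. There exists a dual lattice isomorphism between the lattice of congruences of $\langle A,\to\rangle$ and the lattice (ordered by inclusion) of $T_A$-closed subsets of the expanded Stone space $\langle\mathrm{Ul}(A),\tau_s,T_A\rangle$.
   Context: A conditional algebra is $\langle A,\to\rangle$ with $A$ a Boolean algebra and $\to$ binary with $a\to1=1$, $(a\to b)\wedge(a\to c)=a\to(b\wedge c)$, $(a\vee b)\to c\le(a\to c)\wedge(b\to c)$. $\mathrm{Ul}(A)$ is the Stone space of ultrafilters; closed sets are $\varphi(F)=\{u:F\subseteq u\}$ for filters $F$ (including $F=A$). $D^{\to}_u(F)=\{b:\exists a\in F,\ a\to b\in u\}$; $T_A(u,Z,v)$ iff there is a filter $F$ with $Z=\varphi(F)$ and $D^{\to}_u(F)\subseteq v$. For ultrafilters $x,y$, $\mathbf{C}(x,y)$ is the set of closed $Z$ with $T_A(x,Z,y)$. A closed set $Y$ is $T_A$-closed if for all $x,y$: if $x\in Y$ and $Z$ is a minimal element of $\mathbf{C}(x,y)$ under inclusion, then $Z\subseteq Y$ and $y\in Y$. *)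

(* a Boolean algebra is a complemented distributive lattice
   with top and bottom, i.e. MathComp's ctbDistrLatticeType. *)
From mathcomp Require Import all_boot all_order.
Set Implicit Arguments. Unset Strict Implicit. Unset Printing Implicit Defensive.
Import Order.Theory.
Local Open Scope order_scope.

Section Defs.
Context {disp : Order.disp_t} {A : ctbDistrLatticeType disp}.
Variable imp : A -> A -> A.

Definition psub {T : Type} (P Q : T -> Prop) : Prop := forall z, P z -> Q z.

Definition conditional_algebra : Prop :=
  (forall a : A, imp a \top = \top) /\
  (forall a b c : A, imp a b `&` imp a c = imp a (b `&` c)) /\
  (forall a b c : A, imp (a `|` b) c <= imp a c `&` imp b c).

Definition congruence (th : A -> A -> Prop) : Prop :=
  (forall a, th a a) /\ (forall a b, th a b -> th b a) /\
  (forall a b c, th a b -> th b c -> th a c) /\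
  (forall a b a' b', th a a' -> th b b' -> th (a `&` b) (a' `&` b')) /\
  (forall a b a' b', th a a' -> th b b' -> th (a `|` b) (a' `|` b')) /\
  (forall a a', th a a' -> th (~` a) (~` a')) /\
  (forall a b a' b', th a a' -> th b b' -> th (imp a b) (imp a' b')).

(* filters (the improper filter A included) *)
Definition bfilter (F : A -> Prop) : Prop :=
  F \top /\ (forall a b, F a -> a <= b -> F b) /\
  (forall a b, F a -> F b -> F (a `&` b)).

Definition ultrafilter (u : A -> Prop) : Prop :=
  bfilter u /\ ~ u \bot /\
  (forall G, bfilter G -> ~ G \bot -> psub u G -> psub G u).

Definition phi (F : A -> Prop) : (A -> Prop) -> Prop :=
  fun u => ultrafilter u /\ psub F u.

Definition is_closed (Z : (A -> Prop) -> Prop) : Prop :=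
  exists F, bfilter F /\ Z = phi F.

Definition Dimp (u F : A -> Prop) : A -> Prop :=
  fun b => exists a, F a /\ u (imp a b).

Definition TA (u : A -> Prop) (Z : (A -> Prop) -> Prop) (v : A -> Prop) : Prop :=
  exists F, bfilter F /\ Z = phi F /\ psub (Dimp u F) v.

Definition Cset (x y : A -> Prop) (Z : (A -> Prop) -> Prop) : Prop :=
  is_closed Z /\ TA x Z y.

Definition minimal_C (x y : A -> Prop) (Z : (A -> Prop) -> Prop) : Prop :=
  Cset x y Z /\ (forall Z', Cset x y Z' -> psub Z' Z -> psub Z Z').

Definition TA_closed (Y : (A -> Prop) -> Prop) : Prop :=
  is_closed Y /\
  (forall x y Z, ultrafilter x -> ultrafilter y -> Y x -> minimal_C x y Z ->
     psub Z Y /\ Y y).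

End Defs.

(* A congruence th is determined by its filter F = {a | th a 1} and is sent to
   the closed set phi F.  Since every filter is the intersection of the
   ultrafilters above it, th relates a and b exactly when no ultrafilter of
   phi F separates them; this makes the map injective and order reversing.
   Conversely, for a T_A-closed set Y the relation "no u in Y separates a and b"
   is a Boolean congruence, and it is compatible with -> because Y is closed
   under the minimal elements of C(x, y), which exist by Zorn's lemma applied
   to the filters G with D_x(G) included in y.  Finally phi F is T_A-closed:
   joining F to such a G preserves D_x(G) <= y, so minimality forces F <= G. *)

From mathcomp Require Import all_boot all_order.
From mathcomp Require Import boolp.
From mathcomp Require classical_sets.
From Stdlib Require Import Classical.
Set Implicit Arguments. Unset Strict Implicit. Unset Printing Implicit Defensive.
Import Order.Theory.
Local Open Scope order_scope.

Section Filters.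
Context {disp : Order.disp_t} {A : ctbDistrLatticeType disp}.
Implicit Types (F G P u : A -> Prop) (a b c d e : A).

Lemma filter_top F : bfilter F -> F \top.
Proof. by case. Qed.

Lemma filter_up F a b : bfilter F -> F a -> a <= b -> F b.
Proof. by case=> _ [H _]; apply: H. Qed.

Lemma filter_meet F a b : bfilter F -> F a -> F b -> F (a `&` b).
Proof. by case=> _ [_ H]; apply: H. Qed.

Lemma meetxCU a b : a `&` (~` a `|` b) = a `&` b.
Proof. by rewrite meetUr meetxC join0x. Qed.

Definition upset a : A -> Prop := fun z => a <= z.

Lemma upset_filter a : bfilter (upset a).
Proof.
split; first exact: lex1.
split; first by move=> b c ab bc; exact: le_trans ab bc.
by move=> b c ab ac; rewrite /upset lexI ab.
Qed.

Definition filter_join F G : A -> Prop :=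
  fun c => exists a b, [/\ F a, G b & a `&` b <= c].

Lemma filter_join_filter F G : bfilter F -> bfilter G -> bfilter (filter_join F G).
Proof.
move=> hF hG; split.
  by exists \top, \top; split; [exact: filter_top|exact: filter_top|exact: lex1].
split.
  by move=> c c' [a [b [Fa Gb ab]]] cc'; exists a, b; split=> //; exact: le_trans cc'.
move=> c c' [a [b [Fa Gb ab]]] [a' [b' [Fa' Gb' ab']]].
exists (a `&` a'), (b `&` b'); split; [exact: filter_meet|exact: filter_meet|].
rewrite lexI; apply/andP; split.
  by apply: le_trans ab; apply: leI2; exact: leIl.
by apply: le_trans ab'; apply: leI2; exact: leIr.
Qed.

Lemma filter_join_l F G : bfilter G -> psub F (filter_join F G).
Proof. by move=> hG a Fa; exists a, \top; split=> //; [exact: filter_top|exact: leIl]. Qed.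

Lemma filter_join_r F G : bfilter F -> psub G (filter_join F G).
Proof. by move=> hF b Gb; exists \top, b; split=> //; [exact: filter_top|exact: leIr]. Qed.

Lemma chain_union_filter (C : (A -> Prop) -> Prop) :
  (forall G, C G -> bfilter G) ->
  (forall G H, C G -> C H -> psub G H \/ psub H G) -> (exists G, C G) ->
  bfilter (fun a => exists G, C G /\ G a).
Proof.
move=> Cf Ctot [G0 CG0]; split; first by exists G0; split=> //; exact: filter_top (Cf _ CG0).
split.
  by move=> a b [G [CG Ga]] ab; exists G; split=> //; exact: filter_up (Cf _ CG) Ga ab.
move=> a b [G [CG Ga]] [H [CH Hb]].
case: (Ctot G H CG CH) => [GH|HG].
  by exists H; split=> //; apply: filter_meet (Cf _ CH) (GH _ Ga) Hb.
by exists G; split=> //; apply: filter_meet (Cf _ CG) Ga (HG _ Hb).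
Qed.

Lemma filter_Zorn (S F0 : A -> Prop) : bfilter F0 -> psub F0 S ->
  exists M, [/\ bfilter M, psub F0 M, psub M S &
    forall G, bfilter G -> psub G S -> psub M G -> psub G M].
Proof.
move=> hF0 F0S.
(* Zorn's lemma on the filters between F0 and S; F0 bounds the empty chain. *)
pose T := {G : A -> Prop | [/\ bfilter G, psub F0 G & psub G S]}.
pose t0 : T := exist _ F0 (And3 hF0 (fun _ => id) F0S).
pose R (s t : T) := `[< psub (sval s) (sval t) >].
have Rrefl t : R t t by apply/asboolP.
have Rtrans r s t : R r s -> R s t -> R r t.
  by move=> /asboolP rs /asboolP st; apply/asboolP => z /rs /st.
have Rchain (K : classical_sets.set T) : classical_sets.total_on K R ->
    exists t, forall s, K s -> R s t.
  move=> Ktot; have [[s0 Ks0]|Kempty] := classic (exists s, K s); last first.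
    by exists t0 => s Ks; case: Kempty; exists s.
  pose C G := exists s, K s /\ sval s = G.
  have CP G : C G -> [/\ bfilter G, psub F0 G & psub G S].
    by case=> s [_ <-]; exact: (proj2_sig s).
  pose U a := exists G, C G /\ G a.
  have Uf : bfilter U.
    apply: chain_union_filter; first by move=> G /CP [].
      move=> _ _ [s [Ks <-]] [t [Kt <-]].
      by case: (Ktot s t Ks Kt) => /asboolP; [left|right].
    by exists (sval s0), s0.
  have UP : [/\ bfilter U, psub F0 U & psub U S].
    split=> // [a F0a|a [G [/CP [_ _ GS] /GS //]]].
    by exists (sval s0); split; [exists s0|case: (svalP s0) => _ /(_ a F0a)].
  exists (exist _ U UP : T) => s Ks; apply/asboolP => a sa.
  by exists (sval s); split=> //; exists s.
have [[M [Mf F0M MS]] Mmax] := classical_sets.ZL_preorder t0 Rrefl Rtrans Rchain.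
exists M; split=> // G Gf GS MG.
have PG : [/\ bfilter G, psub F0 G & psub G S] by split=> // z /F0M /MG.
by apply/asboolP; apply: (Mmax (exist _ G PG)); apply/asboolP.
Qed.

Lemma ultrafilter_filter u : ultrafilter u -> bfilter u.
Proof. by case. Qed.

Lemma ultrafilterVC u d : ultrafilter u -> u d \/ u (~` d).
Proof.
move=> [uf [ub umax]]; have [ud|nud] := classic (u d); [by left|right].
have [[m [b [um db mb0]]]|nb] := classic (filter_join u (upset d) \bot).
  apply: filter_up uf um _; rewrite -disj_leC -lex0.
  by apply: le_trans mb0; apply: leI2.
case: nud; apply: umax (filter_join_filter uf (upset_filter d)) nb _ _ _.
  exact: filter_join_l (upset_filter d).
exact: filter_join_r uf _ (lexx d).
Qed.

Lemma ultrafilter_complE u d : ultrafilter u -> u (~` d) <-> ~ u d.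
Proof.
move=> uu; split; last by case: (ultrafilterVC d uu).
move=> ucd ud; case: uu => uf [ub _]; apply: ub.
by rewrite -(meetxC d); exact: filter_meet.
Qed.

Lemma ultrafilter_meetE u a b : ultrafilter u -> u (a `&` b) <-> u a /\ u b.
Proof.
move=> /ultrafilter_filter uf; split; last by case; exact: filter_meet.
by move=> uab; split; apply: filter_up uf uab _; [exact: leIl|exact: leIr].
Qed.

Lemma ultrafilter_joinE u a b : ultrafilter u -> u (a `|` b) <-> u a \/ u b.
Proof.
move=> uu; have uf := ultrafilter_filter uu; split; last first.
  by case=> h; apply: filter_up uf h _; [exact: leUl|exact: leUr].
rewrite -[a `|` b]complK complU ultrafilter_complE // ultrafilter_meetE //.
by rewrite !ultrafilter_complE //; tauto.
Qed.

Lemma ultrafilter_ext P e : bfilter P -> ~ P e ->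
  exists u, [/\ ultrafilter u, psub P u & ~ u e].
Proof.
move=> hP nPe; pose P' := filter_join P (upset (~` e)).
have P'f : bfilter P' := filter_join_filter hP (upset_filter _).
have P'proper : psub P' (fun a => a <> \bot).
  move=> a [p [b [Pp eb pb]]] a0; apply: nPe; apply: filter_up hP Pp _.
  rewrite -[e]complK -disj_leC -lex0 -a0; apply: le_trans pb; exact: leI2.
have [u [uf P'u uproper umax]] := filter_Zorn P'f P'proper.
have uu : ultrafilter u.
  split=> //; split; first by move/uproper.
  by move=> G Gf Gb uG; apply: umax => // a Ga a0; apply: Gb; rewrite -a0.
exists u; split=> //; first by move=> a /(filter_join_l (upset_filter _)) /P'u.
by apply/(ultrafilter_complE _ uu); apply: P'u; exact: filter_join_r hP _ (lexx _).
Qed.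

Lemma filter_uf_intersection G d : bfilter G ->
  (forall u, ultrafilter u -> psub G u -> u d) -> G d.
Proof.
move=> Gf Gd; apply: NNPP => nGd.
by have [u [uu Gu /(_ (Gd u uu Gu))]] := ultrafilter_ext Gf nGd.
Qed.

Lemma phi_sub F G : psub F G -> psub (phi G) (phi F).
Proof. by move=> FG u [uu Gu]; split=> // a /FG /Gu. Qed.

Lemma sub_of_phi_sub F G : bfilter G -> psub (phi G) (phi F) -> psub F G.
Proof.
move=> Gf FG a Fa; apply: filter_uf_intersection => // u uu Gu.
by case: (FG u (conj uu Gu)) => _; apply.
Qed.

End Filters.

Section ConditionalAlgebra.
Context {disp : Order.disp_t} {A : ctbDistrLatticeType disp}.
Context (imp : A -> A -> A) (hA : conditional_algebra imp).
Implicit Types (F G u x y : A -> Prop) (a b c : A).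

Lemma imp_x1 a : imp a \top = \top.
Proof. by case: hA. Qed.

Lemma le_impl a a' c : a <= a' -> imp a' c <= imp a c.
Proof.
move=> aa'; case: hA => _ [_ impUl].
by have := impUl a a' c; rewrite (join_idPr aa') lexI => /andP[].
Qed.

Lemma le_impr a b b' : b <= b' -> imp a b <= imp a b'.
Proof.
move=> bb'; case: hA => _ [impIr _].
by rewrite -(meet_idPl bb') -impIr leIr.
Qed.

Lemma imp_filter x a : bfilter x -> bfilter (fun b => x (imp a b)).
Proof.
move=> xf; split; first by rewrite imp_x1; exact: filter_top.
split; first by move=> b c xb bc; apply: filter_up xf xb (le_impr _ bc).
by move=> b c xb xc; case: hA => _ [impIr _]; rewrite -impIr; exact: filter_meet.
Qed.

Lemma Dimp_subE x y G :
  psub (Dimp imp x G) y <-> psub G (fun a => forall b, x (imp a b) -> y b).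
Proof. by split=> [Dy a Ga b xab|Gy b [a [/Gy Gxy /Gxy]]]; [apply: Dy; exists a|]. Qed.

Lemma minimal_C_of_maximal x y G : bfilter G -> psub (Dimp imp x G) y ->
  (forall H, bfilter H -> psub (Dimp imp x H) y -> psub G H -> psub H G) ->
  minimal_C imp x y (phi G).
Proof.
move=> Gf DGy Gmax; split; first by split; [exists G|exists G].
move=> _ [_ [H [Hf [-> DHy]]]] HG.
by apply: phi_sub; apply: Gmax => //; exact: sub_of_phi_sub.
Qed.

Lemma maximal_of_minimal_C x y G H : bfilter G -> bfilter H ->
  minimal_C imp x y (phi G) -> psub (Dimp imp x H) y -> psub G H -> psub H G.
Proof.
move=> Gf Hf [_ Gmin] DHy GH; apply: sub_of_phi_sub => //.
apply: Gmin; last exact: phi_sub.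
by split; [exists H|exists H].
Qed.

Lemma minimal_C_exists x y a : bfilter x -> psub (fun b => x (imp a b)) y ->
  exists G, [/\ bfilter G, G a, psub (Dimp imp x G) y & minimal_C imp x y (phi G)].
Proof.
move=> xf Ray; pose S c := forall b, x (imp c b) -> y b.
have aS : psub (upset a) S.
  by move=> c ac b xcb; apply: Ray; apply: filter_up xf xcb (le_impl _ ac).
have [G [Gf aG GS Gmax]] := filter_Zorn (upset_filter a) aS.
have DGy : psub (Dimp imp x G) y by apply/Dimp_subE.
exists G; split=> //; first exact: aG (lexx a).
apply: minimal_C_of_maximal => // H Hf /Dimp_subE; exact: Gmax.
Qed.

End ConditionalAlgebra.

Section Congruences.
Context {disp : Order.disp_t} {A : ctbDistrLatticeType disp}.
Context (imp : A -> A -> A) (hA : conditional_algebra imp).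
Implicit Types (th : A -> A -> Prop) (F G u x y : A -> Prop)
  (Y : (A -> Prop) -> Prop) (a b c : A).

Definition con_filter th : A -> Prop := fun a => th a \top.

Definition uf_equiv Y a b : Prop := forall u, Y u -> (u a <-> u b).

Lemma con_filter_filter th : congruence imp th -> bfilter (con_filter th).
Proof.
case=> thxx [_ [_ [thI [thU _]]]]; split; first exact: thxx.
split; last by move=> a b Fa Fb; have := thI _ _ _ _ Fa Fb; rewrite meetx1.
by move=> a b Fa ab; have := thU _ _ _ _ Fa (thxx b); rewrite (join_idPr ab) join1x.
Qed.

Lemma con_filter_saturated th x a b : congruence imp th -> bfilter x ->
  psub (con_filter th) x -> th a b -> x a -> x b.
Proof.
case=> thxx [_ [_ [_ [thU [thC _]]]]] xf Fx thab xa.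
have Fnab : con_filter th (~` a `|` b).
  by have := thU _ _ _ _ (thC _ _ thab) (thxx b); rewrite joinCx.
have := filter_meet xf xa (Fx _ Fnab); rewrite meetxCU => xab.
exact: filter_up xf xab (leIr _ _).
Qed.

Lemma congruenceE th a b : congruence imp th ->
  th a b <-> uf_equiv (phi (con_filter th)) a b.
Proof.
move=> hth; have Ff := con_filter_filter hth.
case: (hth) => thxx [thC [thT [thI _]]].
split=> [thab u [uu Fu]|ab].
  have uf := ultrafilter_filter uu.
  by split; apply: con_filter_saturated uf Fu _ => //; exact: thC.
suff th_meet a' b' : (forall u, ultrafilter u -> psub (con_filter th) u -> u a' -> u b') ->
    th a' (a' `&` b').
  have := th_meet a b (fun u uu Fu => proj1 (ab u (conj uu Fu))).
  have := th_meet b a (fun u uu Fu => proj2 (ab u (conj uu Fu))).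
  by rewrite meetC => thba thab; apply: thT thab (thC _ _ thba).
move=> ab'; have Fnab : con_filter th (~` a' `|` b').
  apply: filter_uf_intersection Ff _ => u uu Fu; apply/ultrafilter_joinE => //.
  by rewrite ultrafilter_complE //; have := ab' u uu Fu; tauto.
by have := thI _ _ _ _ (thxx a') (thC _ _ Fnab); rewrite meetx1 meetxCU.
Qed.

Lemma Dimp_join_con_filter th x y G : congruence imp th -> bfilter x ->
  psub (con_filter th) x -> psub (Dimp imp x G) y ->
  psub (Dimp imp x (filter_join G (con_filter th))) y.
Proof.
move=> hth xf Fx DGy b [c [[g [f [Gg Ff gfc]]] xcb]].
case: (hth) => thxx [_ [_ [thI [_ [_ thimp]]]]].
have thgf : th (g `&` f) g by have := thI _ _ _ _ (thxx g) Ff; rewrite meetx1.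
have xgfb : x (imp (g `&` f) b) := filter_up xf xcb (le_impl hA _ gfc).
apply: DGy; exists g; split=> //.
exact: con_filter_saturated hth xf Fx (thimp _ _ _ _ thgf (thxx b)) xgfb.
Qed.

Lemma con_filter_Dimp th x y G : congruence imp th -> psub (con_filter th) x ->
  bfilter G -> psub (Dimp imp x G) y -> psub (con_filter th) y.
Proof.
move=> [thxx [_ [_ [_ [_ [_ thimp]]]]]] Fx Gf DGy f Ff.
have : con_filter th (imp \top f) by have := thimp _ _ _ _ (thxx \top) Ff; rewrite imp_x1.
by move=> /Fx xf; apply: DGy; exists \top; split=> //; exact: filter_top.
Qed.

Lemma TA_closed_con_filter th : congruence imp th -> TA_closed imp (phi (con_filter th)).
Proof.
move=> hth; have Ff := con_filter_filter hth.
split; first by exists (con_filter th).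
move=> x y Z ux uy [_ Fx] Zmin; have xf := ultrafilter_filter ux.
have [[_ [G [Gf [ZG DGy]]]] _] := Zmin; rewrite ZG in Zmin *.
have GFG : psub (filter_join G (con_filter th)) G.
  apply: maximal_of_minimal_C (filter_join_filter Gf Ff) Zmin _ _ => //.
    exact: Dimp_join_con_filter.
  exact: filter_join_l.
split; last by split=> //; exact: con_filter_Dimp Fx Gf DGy.
by apply: phi_sub => f /(filter_join_r Gf) /GFG.
Qed.


Section TAClosed.
Variable Y : (A -> Prop) -> Prop.
Hypothesis hY : TA_closed imp Y.

Lemma TA_closed_ultrafilter u : Y u -> ultrafilter u.
Proof. by case: hY => [[F [_ ->]] _] []. Qed.

Lemma TA_closed_impl x a a' b : Y x -> uf_equiv Y a a' -> x (imp a b) -> x (imp a' b).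
Proof.
move=> Yx aa' xab; have ux := TA_closed_ultrafilter Yx; have xf := ultrafilter_filter ux.
apply: NNPP => nxa'b.
have [y [uy Ra'y nyb]] := ultrafilter_ext (imp_filter hA a' xf) nxa'b.
have [G [Gf Ga' DGy Gmin]] := minimal_C_exists hA xf Ra'y.
have [GY _] := proj2 hY x y _ ux uy Yx Gmin.
have Ga : G a.
  apply: filter_uf_intersection Gf _ => u uu Gu.
  by apply/(aa' u (GY u (conj uu Gu))); exact: Gu.
by apply: nyb; apply: DGy; exists a.
Qed.

Lemma TA_closed_impr x a b b' : Y x -> uf_equiv Y b b' -> x (imp a b) -> x (imp a b').
Proof.
move=> Yx bb' xab; have ux := TA_closed_ultrafilter Yx; have xf := ultrafilter_filter ux.
apply: NNPP => nxab'.
have [y [uy Ray nyb']] := ultrafilter_ext (imp_filter hA a xf) nxab'.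
have [G [_ _ _ Gmin]] := minimal_C_exists hA xf Ray.
have [_ Yy] := proj2 hY x y _ ux uy Yx Gmin.
by apply: nyb'; apply/(bb' y Yy); exact: Ray.
Qed.

Lemma uf_equiv_congruence : congruence imp (uf_equiv Y).
Proof.
have uY := TA_closed_ultrafilter.
split; first by move=> a u _.
split; first by move=> a b ab u Yu; have := ab u Yu; tauto.
split; first by move=> a b c ab bc u Yu; have := ab u Yu; have := bc u Yu; tauto.
split.
  move=> a b a' b' aa' bb' u /[dup] Yu /uY uu; rewrite !ultrafilter_meetE //.
  by have := aa' u Yu; have := bb' u Yu; tauto.
split.
  move=> a b a' b' aa' bb' u /[dup] Yu /uY uu; rewrite !ultrafilter_joinE //.
  by have := aa' u Yu; have := bb' u Yu; tauto.
split.
  move=> a a' aa' u /[dup] Yu /uY uu; rewrite !ultrafilter_complE //.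
  by have := aa' u Yu; tauto.
have uf_equiv_sym a b : uf_equiv Y a b -> uf_equiv Y b a.
  by move=> ab u Yu; have := ab u Yu; tauto.
move=> a b a' b' aa' bb' x Yx; split=> [xab|xab'].
  exact/(TA_closed_impr Yx bb')/(TA_closed_impl Yx aa').
exact/(TA_closed_impr Yx (uf_equiv_sym _ _ bb'))/(TA_closed_impl Yx (uf_equiv_sym _ _ aa')).
Qed.

End TAClosed.

Lemma con_filter_uf_equiv F : bfilter F -> con_filter (uf_equiv (phi F)) = F.
Proof.
move=> Ff; apply: funext => a; apply: propext; split=> [Fa|Fa u [uu Fu]].
  apply: filter_uf_intersection Ff _ => u uu Fu.
  by apply/(Fa u (conj uu Fu)); exact: filter_top (ultrafilter_filter uu).
by split=> _; [exact: filter_top (ultrafilter_filter uu)|exact: Fu].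
Qed.

Lemma con_filter_sub th1 th2 : congruence imp th1 -> congruence imp th2 ->
  (forall a b, th1 a b -> th2 a b) <-> psub (phi (con_filter th2)) (phi (con_filter th1)).
Proof.
move=> h1 h2; split=> [th12|F21 a b]; first by apply: phi_sub => a; exact: th12.
rewrite (congruenceE _ _ h1) (congruenceE _ _ h2) => ab u Fu.
exact: ab (F21 u Fu).
Qed.

End Congruences.

Theorem theorem8p4 (disp : Order.disp_t) (A : ctbDistrLatticeType disp)
  (imp : A -> A -> A) :
  conditional_algebra imp ->
  exists f : (A -> A -> Prop) -> ((A -> Prop) -> Prop),
    (forall th, congruence imp th -> TA_closed imp (f th)) /\
    (forall Y, TA_closed imp Y -> exists th, congruence imp th /\ f th = Y) /\
    (forall th1 th2, congruence imp th1 -> congruence imp th2 ->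
       ((forall a b, th1 a b -> th2 a b) <-> psub (f th2) (f th1))) /\
    (forall th1 th2, congruence imp th1 -> congruence imp th2 ->
       f th1 = f th2 -> th1 = th2).
Proof.
move=> hA; exists (fun th => phi (con_filter th)); split.
  by move=> th; exact: TA_closed_con_filter.
split.
  move=> Y hY; exists (uf_equiv Y); split; first exact: uf_equiv_congruence.
  by case: (hY) => [[F [Ff YF]] _]; rewrite YF con_filter_uf_equiv.
split; first by move=> th1 th2; exact: con_filter_sub.
move=> th1 th2 h1 h2 E; apply: funext => a; apply: funext => b; apply: propext.
by rewrite (congruenceE _ _ h1) (congruenceE _ _ h2) E.
Qed.
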